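(* If $k \geq 9$ then the sets $\pi_{q_k}(S_{k-1}) + 1$ and $g_{q_k,k}(\pi_{q_k}(A_{q_k}))$ are $q_k^{-2k-4}$-strongly interleaved.
   Context: $q_k$ is the unique root in $(1,2)$ of $x^k - x^{k-1} - \cdots - x - 1 = 0$; note $\sum_{j=1}^k q_k^{-j} = 1$. $\pi_q((\epsilon_j)_{j\ge1}) = \sum_{j\ge1}\epsilon_j q^{-j}$. $S_{k-1}$ is the set of $(\epsilon_j) \in \{0,1\}^\mathbb{N}$ containing no block of consecutive entries equal to $01^{k-1}$ or $10^{k-1}$ (words concatenated, $a^n$ = $n$ repetitions). $g_{q,k}(x) = q^{-k}x + \sum_{j=1}^{k-1}q^{-j}$. The set $A_{q_k}$: let $(c_j)_{j\ge1} = 1^k0^\infty$; let $J = \{j : c_j = 0\}$ enumerated as $j_0 < j_1 < \cdots$; $J_{\mathrm{fixed},1} = \{j_n : n = 4m+1, m \ge 0\}$, $J_{\mathrm{fixed},0} = \{j_n : n = 4m+3, m\ge 0\}$. Then $A_{q_k}$ is the set of $(a_j) \in \{0,1\}^\mathbb{N}$ with $a_j = 1$ if $c_j = 1$, $a_j = 1$ if $j \in J_{\mathrm{fixed},1}$, and $a_j = 0$ if $j \in J_{\mathrm{fixed},0}$ (other entries free). A gap of a compact $C\subset\mathbb{R}$ is a maximal connected component of $\mathbb{R}\setminus C$; compact $C_1,C_2$ are interleaved if neither lies in a gap of the other. $d_{\mathrm{H}}$ is the Hausdorff distance; compact $A,B$ are $\epsilon$-strongly interleaved if any compact $A',B'$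 with $d_{\mathrm{H}}(A,A')\le\epsilon$, $d_{\mathrm{H}}(B,B')\le\epsilon$ are interleaved. *)

From mathcomp Require Import all_boot all_order all_algebra.
From mathcomp Require Import all_classical all_reals all_analysis.
Set Implicit Arguments. Unset Strict Implicit. Unset Printing Implicit Defensive.
Import Order.TTheory GRing.Theory Num.Theory numFieldNormedType.Exports.
Local Open Scope classical_set_scope.
Local Open Scope ring_scope.

Section Defs.
Variable R : realType.

(* Digit sequences (eps_j)_{j>=1} in {0,1}^N are represented by
   e : nat -> bool with  e n = eps_{n+1}  (0-based storage). *)
Definition digits := nat -> bool.

Definition piq (q : R) (e : digits) : R :=
  limn (fun n => \sum_(i < n) (e i)%:R * q ^- i.+1).

(* S_{k-1}: no block of consecutive entries equal to 0 1^{k-1} or 1 0^{k-1} *)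
Definition Sset (k : nat) : set digits :=
  [set e | forall n : nat,
     ~ (e n = false /\ forall i, (1 <= i <= k.-1)%N -> e (n + i)%N = true) /\
     ~ (e n = true /\ forall i, (1 <= i <= k.-1)%N -> e (n + i)%N = false)].

Definition gqk (q : R) (k : nat) (x : R) : R :=
  q ^- k * x + \sum_(1 <= j < k) q ^- j.

(* (c_j)_{j>=1} = 1^k 0^oo, indexed from 1 *)
Definition cseq (k j : nat) : bool := (1 <= j <= k)%N.

(* enumeration j_0 < j_1 < ... of J = {j >= 1 : c_j = 0} = {k+1, k+2, ...} *)
Definition Jenum (k n : nat) : nat := (k + 1 + n)%N.

(* A_{q_k}: a_j = 1 if c_j = 1; a_{j_n} = 1 if n = 4m+1; a_{j_n} = 0 if n = 4m+3.
   Here a_j (j >= 1) is stored as e (j-1). *)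
Definition Aset (k : nat) : set digits :=
  [set e | (forall j, (1 <= j)%N -> cseq k j -> e j.-1 = true) /\
           (forall m, e (Jenum k (4 * m + 1)).-1 = true) /\
           (forall m, e (Jenum k (4 * m + 3)).-1 = false)].

Definition gap (C G : set R) : Prop :=
  exists2 x, ~ C x & G = connected_component (~` C) x.

Definition lies_in_gap (C1 C2 : set R) : Prop :=
  exists2 G, gap C2 G & C1 `<=` G.

Definition interleaved (C1 C2 : set R) : Prop :=
  ~ lies_in_gap C1 C2 /\ ~ lies_in_gap C2 C1.

Definition hausdorff_dist (A B : set R) : \bar R :=
  maxe (ereal_sup [set ereal_inf [set (`|a - b|)%:E | b in B] | a in A])
       (ereal_sup [set ereal_inf [set (`|a - b|)%:E | a in A] | b in B]).

Definition strongly_interleaved (eps : R) (A B : set R) : Prop :=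
  forall A' B' : set R, compact A' -> compact B' ->
    (hausdorff_dist A A' <= eps%:E)%E -> (hausdorff_dist B B' <= eps%:E)%E ->
    interleaved A' B'.

End Defs.

(* A set within Hausdorff distance eps of C has a point within 2 eps of every
   point of C, and every gap is an interval.  So, for X = pi(S_(k-1)) + 1 and
   Y = g(pi(A_(q_k))), it suffices to exhibit points x1 < y < x2 (of X, Y, X)
   and y1 < x < y2 (of Y, X, Y) that are 4 eps apart: perturbed copies of X and
   Y then straddle a point of each other, so neither lies in a gap of the other.
   With u = 1/q_k and s = u^k the digit sequences 0^oo, 1^oo, 0^(2k) (100)^oo of
   S_(k-1) and 1^k (0100)^oo, 1^k (1110)^oo of A_(q_k) give, since g is
   x |-> 1 + s (x - 1) on the root,
     x1 = 1,  x2 = 1 + u/(1-u),  x = 1 + s^2 u/(1-u^3),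
     y1 = 1 + s^2 u^2/(1-u^4),  y = y2 = 1 + s^2 (u+u^2+u^3)/(1-u^4),
   while eps = s^2 u^4.  The separations are then polynomial inequalities in u,
   valid because k >= 9 forces 1/2 < u <= 25/49. *)

From mathcomp Require Import all_boot all_order all_algebra.
From mathcomp Require Import all_classical all_reals all_analysis.
From mathcomp Require Import ring lra zify.
Set Implicit Arguments. Unset Strict Implicit. Unset Printing Implicit Defensive.
Import Order.TTheory GRing.Theory Num.Theory numFieldNormedType.Exports.
Local Open Scope classical_set_scope.
Local Open Scope ring_scope.

Section Expansion.
Variables (R : realType) (q : R).
Hypothesis q_gt1 : 1 < q.

Definition piqn (e : digits) (n : nat) : R := \sum_(i < n) (e i)%:R * q ^- i.+1.

Let q_gt0 : 0 < q. Proof. exact: lt_trans q_gt1. Qed.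

Let invX_ge0 n : 0 <= q ^- n. Proof. by rewrite invr_ge0 exprn_ge0 // ltW. Qed.

Lemma sum_invX n : \sum_(i < n) q ^- i.+1 = (1 - q ^- n) / (q - 1).
Proof.
have q1_neq0 : q - 1 != 0 by rewrite subr_eq0 gt_eqF.
elim: n => [|n IHn]; first by rewrite big_ord0 expr0 invr1 subrr mul0r.
rewrite big_ord_recr /= IHn exprS invfM.
by field; rewrite q1_neq0 !gt_eqF ?exprn_gt0.
Qed.

Lemma sum_invX_root k :
  q ^+ k = \sum_(0 <= i < k) q ^+ i -> \sum_(i < k) q ^- i.+1 = 1.
Proof.
move=> qk; have q1_neq0 : q - 1 != 0 by rewrite subr_eq0 gt_eqF.
have qk1 : q ^+ k - 1 = (q - 1) * q ^+ k by rewrite subrX1 [in RHS]qk big_mkord.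
rewrite sum_invX -[RHS](divff q1_neq0); congr (_ / _).
have qk_neq0 : q ^+ k != 0 by rewrite gt_eqF ?exprn_gt0.
by apply: (mulIf qk_neq0); rewrite mulrBl mulVf // mul1r qk1 mulrC.
Qed.

Lemma piqn_le_sum_invX e n : piqn e n <= \sum_(i < n) q ^- i.+1.
Proof. by apply: ler_sum => i _; case: (e i); rewrite ?mul1r ?mul0r. Qed.

Lemma piqn_nondecreasing e : nondecreasing_seq (piqn e).
Proof.
apply/nondecreasing_seqP => n; rewrite /piqn big_ord_recr /= lerDl.
by case: (e n); rewrite ?mul1r ?mul0r.
Qed.

Lemma is_cvg_piqn e : cvgn (piqn e).
Proof.
apply: nondecreasing_is_cvgn; first exact: piqn_nondecreasing.
exists (q - 1)^-1 => _ [n _ <-]; apply: le_trans (piqn_le_sum_invX e n) _.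
rewrite sum_invX ler_pdivrMr ?subr_gt0 // mulVf ?subr_eq0 ?gt_eqF //.
by rewrite gerBl.
Qed.

Lemma piqnD e N n :
  piqn e (n + N) = piqn e N + q ^- N * piqn (fun i => e (i + N)%N) n.
Proof.
elim: n => [|n IHn]; first by rewrite /piqn big_ord0 mulr0 addr0.
rewrite addSn /piqn big_ord_recr /= -/(piqn e (n + N)) IHn.
rewrite [in RHS]big_ord_recr /= mulrDr addrA; congr (_ + _).
by rewrite mulrCA -invfM -exprD addnS addnC.
Qed.

Lemma piq_shift e N :
  piq q e = piqn e N + q ^- N * piq q (fun i => e (i + N)%N).
Proof.
have : (fun n => piqn e (n + N)) @ \oo -->
       piqn e N + q ^- N * piq q (fun i => e (i + N)%N).
  under eq_fun do rewrite piqnD.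
  apply: cvgD; first exact: cvg_cst.
  apply: cvgM; first exact: cvg_cst.
  exact: is_cvg_piqn.
by rewrite (cvg_shiftn N (piqn e)) => /cvg_lim pi_e; exact: pi_e.
Qed.

Lemma piq_periodic e p : (0 < p)%N -> (forall n, e (n + p)%N = e n) ->
  piq q e = piqn e p / (1 - q ^- p).
Proof.
move=> p_gt0 e_per.
have epi : piq q e = piqn e p + q ^- p * piq q e.
  by rewrite {1}(piq_shift e p); congr (_ + _ * piq q _); apply: funext.
have qp_lt1 : q ^- p < 1.
  by rewrite invf_lt1 ?exprn_gt0 // exprn_egt1 // -lt0n.
have qp1_neq0 : 1 - q ^- p != 0 by rewrite subr_eq0 eq_sym lt_eqF.
by apply: (mulIf qp1_neq0); rewrite mulfVK // mulrBr mulr1 {1}epi; ring.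
Qed.

Section Root.
Variable k : nat.
Hypothesis q_root : q ^+ k = \sum_(0 <= i < k) q ^+ i.

Lemma gqk_root x : gqk q k x = 1 + q ^- k * (x - 1).
Proof.
have := sum_invX_root q_root.
case: k q_root => [|k'] qk.
  by move: qk; rewrite big_geq // => /eqP; rewrite oner_eq0.
rewrite /gqk big_add1 big_mkord big_ord_recr /= => /(canRL (addrK _)) ->; ring.
Qed.

Lemma piq_ones_prefix (e : digits) : (forall n, (n < k)%N -> e n) ->
  piq q e = 1 + q ^- k * piq q (fun n => e (n + k)%N).
Proof.
move=> e_pre; rewrite (piq_shift e k) -(sum_invX_root q_root); congr (_ + _).
by apply: eq_bigr => i _; rewrite e_pre ?mul1r.
Qed.

Lemma gqk_piq_ones_prefix (e : digits) : (forall n, (n < k)%N -> e n) ->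
  gqk q k (piq q e) = 1 + q ^- (2 * k) * piq q (fun n => e (n + k)%N).
Proof.
move=> e_pre; rewrite gqk_root piq_ones_prefix // addrAC subrr add0r.
by rewrite mulrA -invfM -exprD addnn mul2n.
Qed.

End Root.

End Expansion.

Section Interleaving.
Variable R : realType.

Lemma not_lies_in_gap_between (A B : set R) a1 a2 b :
  A a1 -> A a2 -> B b -> a1 <= b <= a2 -> ~ lies_in_gap A B.
Proof.
move=> Aa1 Aa2 Bb a1ba2 [_ [x Bx ->] AG].
have /connected_intervalP G_itv := @component_connected R (~` B) x.
by have /connected_component_sub := G_itv a1 a2 (AG _ Aa1) (AG _ Aa2) b a1ba2.
Qed.

Lemma hausdorff_dist_near (A A' : set R) eps d a :
  eps < d -> (hausdorff_dist A A' <= eps%:E)%E -> A a ->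
  exists2 a', A' a' & `|a - a'| < d.
Proof.
move=> eps_d dAA' Aa.
have : (ereal_inf [set (`|a - b|)%:E | b in A'] < d%:E)%E.
  apply: le_lt_trans (_ : _ <= eps%:E)%E _; last by rewrite lte_fin.
  apply: le_trans dAA'; rewrite le_max; apply/orP; left.
  by apply: ereal_sup_ubound; exists a.
by case/ereal_inf_lt => _ [b A'b <-]; rewrite lte_fin; exists b.
Qed.

Lemma hausdorff_not_lies_in_gap (A B A' B' : set R) eps a1 a2 b :
  0 < eps -> (hausdorff_dist A A' <= eps%:E)%E ->
  (hausdorff_dist B B' <= eps%:E)%E ->
  A a1 -> A a2 -> B b -> a1 + 4 * eps <= b <= a2 - 4 * eps ->
  ~ lies_in_gap A' B'.
Proof.
move=> eps_gt0 dAA' dBB' Aa1 Aa2 Bb /andP[a1b ba2].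
have eps_2eps : eps < 2 * eps by lra.
have [a1' A'a1' a1a1'] := hausdorff_dist_near eps_2eps dAA' Aa1.
have [a2' A'a2' a2a2'] := hausdorff_dist_near eps_2eps dAA' Aa2.
have [b' B'b' bb'] := hausdorff_dist_near eps_2eps dBB' Bb.
apply: (not_lies_in_gap_between A'a1' A'a2' B'b').
move: a1a1' a2a2' bb'; rewrite !ltr_distlC => /andP[_ ?] /andP[? _] /andP[? ?].
by apply/andP; split; lra.
Qed.

End Interleaving.

Definition zeros : digits := fun=> false.
Definition ones : digits := fun=> true.
Definition zeros_then_100 (N : nat) : digits :=
  fun n => (N <= n)%N && ((n - N) %% 3 == 0)%N.
Definition ones_then_0100 (N : nat) : digits :=
  fun n => (n < N)%N || ((n - N) %% 4 == 1)%N.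
Definition ones_then_1110 (N : nat) : digits :=
  fun n => (n < N)%N || ((n - N) %% 4 != 3)%N.

Lemma Sset_zeros k : (2 <= k)%N -> Sset k zeros.
Proof. by move=> k_ge2 n; split=> [[_ /(_ 1%N)] | []] // /(_ ltac:(lia)). Qed.

Lemma Sset_ones k : (2 <= k)%N -> Sset k ones.
Proof. by move=> k_ge2 n; split=> [[] | [_ /(_ 1%N)]] // /(_ ltac:(lia)). Qed.

Lemma Sset_zeros_then_100 k N : (4 <= k)%N -> Sset k (zeros_then_100 N).
Proof.
move=> k_ge4 n; rewrite /zeros_then_100; split.
- case=> _ ones_after; move: (ones_after 1%N) (ones_after 2%N).
  by move=> /(_ ltac:(lia)) /andP[? /eqP ?] /(_ ltac:(lia)) /andP[? /eqP ?]; lia.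
- case=> /andP[? /eqP ?] /(_ 3%N ltac:(lia)) /negbT.
  by rewrite negb_and => /orP[|/eqP []]; lia.
Qed.

Lemma Aset_ones_then_0100 k : Aset k (ones_then_0100 k).
Proof.
rewrite /Aset /ones_then_0100 /Jenum /cseq; split; last split=> m.
- by move=> j ? ?; apply/orP; left; lia.
- by apply/orP; right; apply/eqP; lia.
- by apply/negbTE; rewrite negb_or -leqNgt; apply/andP; split; [lia | apply/eqP; lia].
Qed.

Lemma Aset_ones_then_1110 k : Aset k (ones_then_1110 k).
Proof.
rewrite /Aset /ones_then_1110 /Jenum /cseq; split; last split=> m.
- by move=> j ? ?; apply/orP; left; lia.
- by apply/orP; right; apply/eqP; lia.
- by apply/negbTE; rewrite negb_or negbK -leqNgt; apply/andP; split; [lia | apply/eqP; lia].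
Qed.

Section Values.
Variables (R : realType) (q : R).
Hypothesis q_gt1 : 1 < q.

Lemma piq_zeros : piq q zeros = 0.
Proof. by rewrite (piq_periodic q_gt1 (p:=1)) // /piqn big_ord1 mul0r mul0r. Qed.

Lemma piq_ones : piq q ones = q^-1 / (1 - q^-1).
Proof. by rewrite (piq_periodic q_gt1 (p:=1)) // /piqn big_ord1 mul1r expr1. Qed.

Lemma piq_zeros_then_100 N :
  piq q (zeros_then_100 N) = q ^- N * (q^-1 / (1 - q ^- 3)).
Proof.
rewrite (piq_shift q_gt1 _ N) /piqn big1 ?add0r => [|i _]; last first.
  by rewrite /zeros_then_100 leqNgt ltn_ord mul0r.
have -> : (fun n => zeros_then_100 N (n + N)) = (fun n => n %% 3 == 0)%N.
  by apply: funext => n; rewrite /zeros_then_100 leq_addl addnK.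
rewrite (piq_periodic q_gt1 (p:=3)) // => [|n]; last by rewrite modnDr.
by rewrite /piqn !big_ord_recr big_ord0 /= !mul0r !mul1r !addr0 add0r expr1.
Qed.

Section Root.
Variable k : nat.
Hypothesis q_root : q ^+ k = \sum_(0 <= i < k) q ^+ i.

Lemma gqk_piq_ones_then_0100 :
  gqk q k (piq q (ones_then_0100 k)) = 1 + q ^- (2 * k) * (q ^- 2 / (1 - q ^- 4)).
Proof.
rewrite (gqk_piq_ones_prefix q_gt1 q_root) => [|n nk]; last by apply/orP; left.
have -> : (fun n => ones_then_0100 k (n + k)) = (fun n => n %% 4 == 1)%N.
  by apply: funext => n; rewrite /ones_then_0100 ltnNge leq_addl addnK.
rewrite (piq_periodic q_gt1 (p:=4)) // => [|n]; last by rewrite modnDr.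
by rewrite /piqn !big_ord_recr big_ord0 /= !mul0r !mul1r !addr0 !add0r.
Qed.

Lemma gqk_piq_ones_then_1110 : gqk q k (piq q (ones_then_1110 k)) =
  1 + q ^- (2 * k) * ((q^-1 + q ^- 2 + q ^- 3) / (1 - q ^- 4)).
Proof.
rewrite (gqk_piq_ones_prefix q_gt1 q_root) => [|n nk]; last by apply/orP; left.
have -> : (fun n => ones_then_1110 k (n + k)) = (fun n => n %% 4 != 3)%N.
  by apply: funext => n; rewrite /ones_then_1110 ltnNge leq_addl addnK.
rewrite (piq_periodic q_gt1 (p:=4)) // => [|n]; last by rewrite modnDr.
by rewrite /piqn !big_ord_recr big_ord0 /= !mul0r !mul1r !addr0 !add0r expr1.
Qed.

End Root.
End Values.

Lemma separation_inequalities (R : realFieldType) (u t : R) :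
  1/2 < u <= 25/49 -> 0 <= t <= 1/2 ->
  let Tlo := u ^+ 2 / (1 - u ^+ 4) in
  let Tmid := u / (1 - u ^+ 3) in
  let Thi := (u + u ^+ 2 + u ^+ 3) / (1 - u ^+ 4) in
  let eps := t * u ^+ 4 in
  [/\ 4 * eps <= t * Thi, t * Thi + 4 * eps <= u / (1 - u),
      t * Tlo + 4 * eps <= t * Tmid & t * Tmid + 4 * eps <= t * Thi].
Proof.
move=> /andP[u_gt u_le] /andP[t_ge0 t_le] Tlo Tmid Thi eps.
have pow_bounds n : (1/2) ^+ n <= u ^+ n <= (25/49) ^+ n.
  by apply/andP; split; apply: lerXn2r; rewrite ?nnegrE //; lra.
have [u2_ge u2_le] := andP (pow_bounds 2%N).
have [u3_ge u3_le] := andP (pow_bounds 3%N).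
have [u4_ge u4_le] := andP (pow_bounds 4%N).
rewrite !exprS !expr0 in u2_ge u2_le u3_ge u3_le u4_ge u4_le.
have Tlo_le : Tlo <= 2/7 by rewrite ler_pdivrMr; lra.
have Tmid_ge : 4/7 <= Tmid by rewrite ler_pdivlMr; lra.
have Tmid_le : Tmid <= 3/5 by rewrite ler_pdivrMr; lra.
have Thi_ge : 14/15 <= Thi by rewrite ler_pdivlMr; lra.
have Thi_le : Thi <= 1 by rewrite ler_pdivrMr; lra.
have T1_ge : 1 <= u / (1 - u) by rewrite ler_pdivlMr; lra.
rewrite /eps; clearbody Tlo Tmid Thi.
split; nra.
Qed.

Lemma inv_root_bounds (R : realType) k (q : R) : (9 <= k)%N -> 1 < q < 2 ->
  q ^+ k = \sum_(0 <= i < k) q ^+ i -> 1/2 < q^-1 <= 25/49.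
Proof.
move=> k_ge9 /andP[q_gt1 q_lt2] q_root; have q_gt0 : 0 < q := lt_trans ltr01 q_gt1.
have qVq : q * q^-1 = 1 by rewrite divff // gt_eqF.
apply/andP; split; first nra.
rewrite leNgt; apply/negP => u_gt.
have sum9_le1 : \sum_(i < 9) q^-1 ^+ i.+1 <= 1.
  under eq_bigr do rewrite exprVn.
  rewrite -(sum_invX_root q_gt1 q_root) -(subnKC k_ge9) big_split_ord /= lerDl.
  by rewrite sumr_ge0 // => i _; rewrite invr_ge0 exprn_ge0 // ltW.
have : \sum_(i < 9) (25/49 : R) ^+ i.+1 <= 1.
  apply: le_trans sum9_le1; apply: ler_sum => i _.
  by apply: lerXn2r; rewrite ?nnegrE ?invr_ge0; lra.
by rewrite !big_ord_recr big_ord0 /= !exprS !expr0; lra.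
Qed.

Lemma invX_double_bounds (R : realFieldType) k (q : R) : (0 < k)%N ->
  1/2 < q^-1 <= 25/49 -> 0 <= q ^- (2 * k) <= 1/2.
Proof.
move=> k_gt0 /andP[u_gt u_le].
have u2k_le : q^-1 ^+ (2 * k) <= q^-1 ^+ 2 by apply: ler_wiXn2l; [lra | lra | lia].
rewrite -exprVn exprn_ge0 /=; last lra.
by apply: le_trans u2k_le _; rewrite expr2; nra.
Qed.

Theorem lemma4p5 (R : realType) (k : nat) (q : R) :
  (9 <= k)%N -> 1 < q < 2 -> q ^+ k = \sum_(0 <= i < k) q ^+ i ->
  strongly_interleaved (q ^- (2 * k + 4))
    [set x + 1 | x in piq q @` Sset k]
    (gqk q k @` (piq q @` Aset k)).
Proof.
move=> k_ge9 q_bounds q_root A' B' _ _ dXA' dYB'.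
have /andP[q_gt1 _] := q_bounds.
have [k_ge2 k_ge4] : (2 <= k)%N /\ (4 <= k)%N by lia.
have X_piq e : Sset k e -> [set x + 1 | x in piq q @` Sset k] (piq q e + 1).
  by move=> Se; exists (piq q e) => //; exists e.
have Y_gqk e : Aset k e -> (gqk q k @` (piq q @` Aset k)) (gqk q k (piq q e)).
  by move=> Ae; exists (piq q e) => //; exists e.
rewrite exprD invfM in dXA' dYB'.
have eps_gt0 : 0 < q ^- (2 * k) / q ^+ 4.
  by rewrite mulr_gt0 // invr_gt0 exprn_gt0 // (lt_trans ltr01).
have u_bounds := inv_root_bounds k_ge9 q_bounds q_root.
have t_bounds := invX_double_bounds (ltnW k_ge2) u_bounds.
have [sep1 sep2 sep3 sep4] := separation_inequalities u_bounds t_bounds.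
rewrite !exprVn in sep1 sep2 sep3 sep4.
split.
- apply: (hausdorff_not_lies_in_gap eps_gt0 dXA' dYB' (X_piq _ (Sset_zeros k_ge2))
    (X_piq _ (Sset_ones k_ge2)) (Y_gqk _ (Aset_ones_then_1110 k))).
  rewrite piq_zeros // piq_ones // gqk_piq_ones_then_1110 //.
  apply/andP; split; lra.
- apply: (hausdorff_not_lies_in_gap eps_gt0 dYB' dXA' (Y_gqk _ (Aset_ones_then_0100 k))
    (Y_gqk _ (Aset_ones_then_1110 k)) (X_piq _ (Sset_zeros_then_100 (2 * k) k_ge4))).
  rewrite piq_zeros_then_100 // gqk_piq_ones_then_0100 // gqk_piq_ones_then_1110 //.
  apply/andP; split; lra.
Qed.
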